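(* Let $n\ge3$ and let $A$ be a set of $m$ vertices of $C_n$ with $2\le m\le n$. (1) If $n$ is even or $m$ is odd, then $A$ is a maximizer of $W$ on $C_n$ if and only if $A$ is balanced in $C_n$. (2) If $n$ is odd and $m$ is even, then $A$ is a maximizer of $W$ on $C_n$ if and only if $A$ is weakly balanced in $C_n$; moreover, in this case no maximizer of $W$ on $C_n$ of cardinality $m$ is balanced. (3) In all cases, $A$ is a maximizer of $W$ on $C_n$ if and only if $A$ is weakly balanced in $C_n$.
   Context: $C_n$ has vertex set $\{0,\dots,n-1\}$ with $i$ adjacent to $i+1\bmod n$. $W(A)=\sum_{\{u,v\}\subseteq A,u\ne v}d(u,v)$ over unordered pairs, $d$ geodesic distance; $A$ is a maximizer of $W$ if $W(A)=\max\{W(B):|B|=|A|\}$. A set of vertices is connected if it induces a connected subgraph. A partition of $V(G)$ is equitable if any two blocks differ in size by at most one. $A$ is balanced in $G$ if for every equitable partition $\{P,Q\}$ of $V(G)$ into two connected blocks, $|A\cap P|$ and $|A\cap Q|$ differ by at most one. $A$ is weakly balanced in $G$ if for every equitable partition $\{P,Q\}$ of $V(G)$ into two connected blocks, $|A\cap P|$ and $|A\cap Q|$ differ by at most two, and whenever $|A\cap Q|=|A\cap P|+2$ we have $|P|<|Q|$. *)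

From mathcomp Require Import all_boot all_order.
Set Implicit Arguments. Unset Strict Implicit. Unset Printing Implicit Defensive.

Definition cyc_adj (n : nat) : rel 'I_n :=
  fun i j => (val j == (val i).+1 %% n) || (val i == (val j).+1 %% n).

Definition cdist (n : nat) (u v : 'I_n) : nat :=
  let k := maxn (val u) (val v) - minn (val u) (val v) in minn k (n - k).

Definition W (n : nat) (A : {set 'I_n}) : nat :=
  \sum_(u in A) \sum_(v in A | val u < val v) cdist u v.

Definition maximizer (n : nat) (A : {set 'I_n}) : Prop :=
  forall B : {set 'I_n}, #|B| = #|A| -> W B <= W A.

Definition induced_adj (n : nat) (P : {set 'I_n}) : rel 'I_n :=
  fun x y => [&& x \in P, y \in P & cyc_adj x y].

Definition connected_set (n : nat) (P : {set 'I_n}) : Prop :=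
  forall x y, x \in P -> y \in P -> connect (induced_adj P) x y.

Definition eq_conn_bipartition (n : nat) (P Q : {set 'I_n}) : Prop :=
  [/\ P :|: Q = setT, P :&: Q = set0, P != set0 /\ Q != set0,
      #|P| <= #|Q|.+1 /\ #|Q| <= #|P|.+1 &
      connected_set P /\ connected_set Q].

Definition balanced (n : nat) (A : {set 'I_n}) : Prop :=
  forall P Q : {set 'I_n}, eq_conn_bipartition P Q ->
    #|A :&: P| <= #|A :&: Q|.+1 /\ #|A :&: Q| <= #|A :&: P|.+1.

(* Quantifying over ordered pairs (P,Q) covers both labelings of {P,Q}. *)
Definition weakly_balanced (n : nat) (A : {set 'I_n}) : Prop :=
  forall P Q : {set 'I_n}, eq_conn_bipartition P Q ->
    [/\ #|A :&: P| <= #|A :&: Q|.+2, #|A :&: Q| <= #|A :&: P|.+2 &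
        (#|A :&: Q| = #|A :&: P|.+2 -> #|P| < #|Q|)].

(* Let h = n./2. The sets of h consecutive vertices ("half-arcs") are exactly the
   blocks of the equitable partitions of C_n into two connected parts, and they
   encode the distance: exactly 2 d(u,v) of the n half-arcs contain one of u, v
   but not the other. Writing x_s for the number of points of A in the half-arc
   starting at s, this gives 2 W(A) = sum_s x_s (m - x_s). A term is maximal when
   x_s splits m evenly; when n is odd and m even one uses instead the bound
   4 x (m - x) <= m^2 - 2m + 4x, which sums to a constant because
   sum_s x_s = m h, and whose equality cases x = m/2 and x = m/2 - 1 are exactly
   the weak balance. The jump set of j |-> floor (j m / n) attains equality for
   every s, so A is a maximizer iff every x_s is an equality case, that is, iff
   A is (weakly) balanced. *)

From mathcomp Require Import all_boot all_order ssralg finalg zmodp zify.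
Set Implicit Arguments. Unset Strict Implicit. Unset Printing Implicit Defensive.
Import GRing.Theory.

Lemma sum_ord_ltn (M L : nat) : \sum_(i < M) (i < L : nat) = minn L M.
Proof.
elim: M => [|M IH]; first by rewrite big_ord0; lia.
by rewrite big_ord_recr /= IH; case: ltnP; lia.
Qed.

Lemma modnD_lt (i j d : nat) : i < d -> j < d ->
  (i + j) %% d = if i + j < d then i + j else i + j - d.
Proof.
move=> hi hj; case: ltnP => h; first by rewrite modn_small.
have -> : i + j = (i + j - d) + d by lia.
by rewrite modnDr modn_small; lia.
Qed.

Lemma card_sum (T : finType) (B : {set T}) : #|B| = \sum_(v : T) (v \in B : nat).
Proof. by rewrite -sum1_card big_mkcond. Qed.

Lemma cardI_sum (T : finType) (A B : {set T}) :
  #|A :&: B| = \sum_(u in A) (u \in B : nat).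
Proof.
rewrite -sum1_card big_mkcond [RHS]big_mkcond; apply: eq_bigr => u _.
by rewrite in_setI; case: (u \in A); case: (u \in B).
Qed.

Lemma cardD_sum (T : finType) (A B : {set T}) :
  #|A :\: B| = \sum_(u in A) (u \notin B : nat).
Proof. by rewrite setDE cardI_sum; under eq_bigr do rewrite in_setC. Qed.

Lemma reindex_subr (V : finZmodType) (u : V) (F : V -> nat) :
  \sum_(s : V) F (u - s)%R = \sum_(t : V) F t.
Proof. by rewrite [RHS](reindex_inj (@subrI _ u)). Qed.

Lemma reindex_addr (V : finZmodType) (s : V) (F : V -> nat) :
  \sum_(v : V) F v = \sum_(t : V) F (t + s)%R.
Proof. exact: (reindex_inj (@addIr _ s)). Qed.

Lemma sum_pairs_ltn n (A : {set 'I_n}) (F : 'I_n -> 'I_n -> nat) :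
    (forall u, F u u = 0) ->
  \sum_(u in A) \sum_(v in A) F u v =
  \sum_(u in A) \sum_(v in A | u < v) (F u v + F v u).
Proof.
move=> F0.
have split_diag u v : F u v = (u < v) * F u v + (v < u) * F u v.
  by case: ltngtP => [||/val_inj->]; rewrite ?F0 ?mul1n ?mul0n ?addn0.
under [RHS]eq_bigr do rewrite big_mkcondr /=.
under [RHS]eq_bigr do under eq_bigr do rewrite -mulnbl mulnDr.
under [RHS]eq_bigr do rewrite big_split /=.
rewrite big_split /= [X in _ + X]exchange_big /= -big_split /=.
apply: eq_bigr => u _; rewrite -big_split /=; apply: eq_bigr => v _.
exact: split_diag.
Qed.

Section Cycle.
Variable p : nat.
Hypothesis p_gt0 : 0 < p.
Local Notation N := p.+1.
Local Notation T := 'I_N.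

Lemma val_ordD (x y : T) : val (x + y)%R = (val x + val y) %% N.
Proof. by []. Qed.

Lemma val_ordB (x y : T) : val (x - y)%R = if y <= x then x - y else x + N - y.
Proof.
have hx := ltn_ord x; have hy := ltn_ord y; rewrite /=.
case: (posnP y) => [->|y_gt0]; first by rewrite subn0 modnn addn0 modn_small ?subn0.
rewrite (modn_small (m := N - y)); last lia.
case: leqP => hyx; last by rewrite modn_small; lia.
have -> : x + (N - y) = (x - y) + N by lia.
by rewrite modnDr modn_small; lia.
Qed.

Lemma val_inZp (t : nat) : t < N -> val (inZp t : T) = t.
Proof. by move=> ht; rewrite /= modn_small. Qed.

Definition arc (s : T) (L : nat) : {set T} := [set v : T | val (v - s)%R < L].

Lemma in_arc v s L : (v \in arc s L) = (val (v - s)%R < L).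
Proof. by rewrite inE. Qed.

Lemma card_arc s L : #|arc s L| = minn L N.
Proof.
rewrite card_sum (reindex_addr s).
under eq_bigr do rewrite in_arc addrK.
exact: sum_ord_ltn.
Qed.

Definition separations (L : nat) (u v : T) : nat :=
  \sum_(s : T) ((u \in arc s L) && (v \notin arc s L) : nat).

Lemma separationsE L u v : L <= N ->
  separations L u v = minn L (N - val (v - u)%R) - (L - val (v - u)%R).
Proof.
move=> hL; rewrite /separations -(reindex_subr u).
under eq_bigr => t _.
  rewrite !in_arc subKr.
  have -> : (v - (u - t) = t + (v - u))%R by rewrite opprB addrCA.
  rewrite val_ordD -leqNgt.
over.
case: (v - u)%R => d d_lt /=.
suff sum_prefix M : M <= N -> \sum_(i < M) ((i < L) && (L <= (i + d) %% N) : nat)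
   = minn (minn L M) (N - d) - (L - d) by rewrite sum_prefix //; lia.
elim: M => [|M IH] hM; first by rewrite big_ord0; lia.
rewrite big_ord_recr /= IH; last lia.
rewrite modnD_lt; [|lia|lia].
by case: ltnP => h1; case: ltnP => h2; rewrite /=; try case: leqP => h3; lia.
Qed.

Definition half := N./2.

Lemma half_bounds : half + half <= N <= half + half + 1.
Proof. by rewrite /half; have := odd_double_half N; case: (odd N) => /=; lia. Qed.

Lemma half_leN : half <= N.
Proof. by have := half_bounds; lia. Qed.

Lemma separations_sym u v :
  separations half u v + separations half v u = 2 * cdist u v.
Proof.
rewrite !separationsE ?half_leN // !val_ordB /cdist.
have := half_bounds; have := ltn_ord u; have := ltn_ord v.
by case: (leqP u v) => h1; [case: (leqP v u) => h2 | rewrite (ltnW h1)]; lia.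
Qed.

Lemma separationsxx u : separations half u u = 0.
Proof. by rewrite separationsE ?half_leN // subrr /=; lia. Qed.

Definition inside (A : {set T}) (s : T) := #|A :&: arc s half|.

Lemma inside_le (A : {set T}) s : inside A s <= #|A|.
Proof. exact: subset_leq_card (subsetIl A _). Qed.

Lemma card_outside (A : {set T}) s : #|A :&: ~: arc s half| = #|A| - inside A s.
Proof. by rewrite -setDE -(cardsID (arc s half) A) addKn. Qed.

Lemma sum_inside_outside (A : {set T}) :
  \sum_(s : T) inside A s * (#|A| - inside A s) = 2 * W A.
Proof.
under eq_bigr do rewrite -card_outside -setDE /inside cardI_sum cardD_sum big_distrlr /=.
rewrite exchange_big /=; under eq_bigr do rewrite exchange_big /=.
under eq_bigr do under eq_bigr do under eq_bigr do rewrite mulnb.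
rewrite -/(separations half _ _) sum_pairs_ltn; last exact: separationsxx.
rewrite /W big_distrr /=; apply: eq_bigr => u _.
rewrite big_distrr /=; apply: eq_bigr => v _.
exact: separations_sym.
Qed.

Lemma sum_inside (A : {set T}) : \sum_(s : T) inside A s = #|A| * half.
Proof.
rewrite /inside; under eq_bigr do rewrite cardI_sum.
rewrite exchange_big /= -sum_nat_const; apply: eq_bigr => u _.
rewrite -(reindex_subr u); under eq_bigr do rewrite in_arc subKr.
by rewrite sum_ord_ltn; have := half_leN; lia.
Qed.

Definition optimal_split (m x : nat) : bool :=
  (m - x <= x.+1) && (x <= (m - x).+1) || odd N && (m - x == x.+2).

Definition split_bound (m x : nat) : nat :=
  if odd m then m * m - 1 else if odd N then m * m - 2 * m + 4 * x else m * m.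

Lemma split_leqif m x : x <= m ->
  4 * (x * (m - x)) <= split_bound m x ?= iff optimal_split m x.
Proof.
move=> hx; rewrite /split_bound /optimal_split.
have [y ->] : exists y, m = x + y by exists (m - x); lia.
rewrite addKn.
have [[d ->]|[d ->]] : (exists d, y = x + d) \/ (exists d, x = y + d.+1).
  by case: (leqP x y) => h; [left; exists (y - x) | right; exists (x - y.+1)]; lia.
all: have [h [->|->]] : exists h, d = h.*2 \/ d = h.*2.+1 by
  exists d./2; have := odd_double_half d; case: (odd d) => /= ed; [right | left]; lia.
all: rewrite !oddD ?oddS odd_double ?addbF ?addbT ?addbN ?addNb ?addbb /=.
all: by case: (odd p) => /=; split; nia.
Qed.

Definition optimal_arcs (A : {set T}) : bool :=
  [forall s, optimal_split #|A| (inside A s)].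

Definition bound8W (m : nat) : nat :=
  if odd m then N * (m * m - 1)
  else if odd N then N * (m * m - 2 * m) + 4 * (m * half) else N * (m * m).

Lemma sum_split_bound (A : {set T}) :
  \sum_(s : T) split_bound #|A| (inside A s) = bound8W #|A|.
Proof.
rewrite /split_bound /bound8W.
case: (odd #|A|); last case: (odd N); last 2 first.
- by rewrite big_split /= -big_distrr sum_nat_const card_ord sum_inside mulnC.
all: by rewrite sum_nat_const card_ord mulnC.
Qed.

Lemma W_leqif (A : {set T}) : 8 * W A <= bound8W #|A| ?= iff optimal_arcs A.
Proof.
rewrite -sum_split_bound -[8]/(4 * 2) -mulnA -sum_inside_outside big_distrr /=.
by apply: leqif_sum => s _; apply: split_leqif; apply: inside_le.
Qed.

Section Sturm.
Variable m : nat.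
Hypothesis m_le : m <= N.

Definition stair (j : nat) := j * m %/ N.

Lemma stair_addMN j q : stair (j + q * N) = stair j + q * m.
Proof. by rewrite /stair mulnDl -mulnA (mulnC N m) mulnA divnDMl. Qed.

Lemma stair_mono : {homo stair : i j / i <= j}.
Proof. by move=> i j h; apply: leq_div2r; rewrite leq_mul2r h orbT. Qed.

Lemma stair_step j : stair j.+1 <= (stair j).+1.
Proof.
rewrite /stair mulSn addnC divnD //.
have := ltn_pmod (j * m) (ltn0Sn p).
case: (ltnP m N) => hm; first by rewrite (divn_small hm) (modn_small hm); lia.
have -> : m = N by lia.
by rewrite modnn divnn /=; lia.
Qed.

Definition jump (j : nat) := stair j.+1 - stair j.

Lemma jump_mod j : jump (j %% N) = jump j.
Proof.
by rewrite {2}(divn_eq j N) addnC /jump -addSn !stair_addMN; lia.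
Qed.

Definition sturm : {set T} := [set v : T | stair v < stair v.+1].

Lemma in_sturm (v : T) : (v \in sturm : nat) = jump v.
Proof.
rewrite inE /jump; have := stair_step v; have := stair_mono (leqnSn v).
by case: ltnP; lia.
Qed.

Lemma sum_jump s L : \sum_(i < L) jump (i + s) = stair (L + s) - stair s.
Proof.
elim: L => [|L IH]; first by rewrite big_ord0 subnn.
rewrite big_ord_recr /= IH /jump addSn.
by have := stair_mono (leq_addl L s); have := stair_mono (leqnSn (L + s)); lia.
Qed.

Lemma card_sturm : #|sturm| = m.
Proof.
rewrite card_sum; under eq_bigr do rewrite in_sturm -[val _]addn0.
by rewrite sum_jump /stair addn0 mul0n div0n subn0 mulKn.
Qed.

Lemma inside_sturm s :
  inside sturm s = half * m %/ N + (N <= half * m %% N + s * m %% N).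
Proof.
rewrite /inside card_sum (reindex_addr s).
under eq_bigr do rewrite in_setI in_arc addrK.
rewrite (eq_bigr (fun t : T => if val t < half then jump (val t + s) else 0)); last first.
  move=> t _; rewrite -jump_mod -val_ordD -in_sturm.
  by case: (val t < half); rewrite ?andbT ?andbF.
rewrite -big_mkcond /= -(big_ord_widen _ (fun i => jump (i + s)) half_leN) sum_jump.
by rewrite /stair mulnDl divnD // addnAC addnK.
Qed.

Lemma optimal_arcs_sturm : optimal_arcs sturm.
Proof.
apply/forallP => s; rewrite /optimal_split card_sturm inside_sturm.
have := ltn_pmod (s * m) (ltn0Sn p); move: (s * m %% N) => y y_lt.
have quot_rem q r : half * m = q * N + r -> r < N ->
    half * m %/ N = q /\ half * m %% N = r.
  by move=> -> r_lt; rewrite divnMDl // modnMDl (divn_small r_lt) (modn_small r_lt) addn0.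
have := odd_double_half m; have := odd_double_half N; rewrite -/half.
move: (m./2) => j; case: (odd N) => /= eN; case: (odd m) => /= em.
- by have [-> ->] := quot_rem j (half - j) ltac:(nia) ltac:(lia); lia.
- case: j em => [|j] em.
    by have [-> ->] := quot_rem 0 0 ltac:(nia) ltac:(lia); lia.
  by have [-> ->] := quot_rem j (N - j.+1) ltac:(nia) ltac:(lia); lia.
- by have [-> ->] := quot_rem j half ltac:(nia) ltac:(lia); lia.
- by have [-> ->] := quot_rem j 0 ltac:(nia) ltac:(lia); lia.
Qed.

End Sturm.

Lemma maximizerE (A : {set T}) : #|A| <= N -> maximizer A <-> optimal_arcs A.
Proof.
move=> A_le; have S_card := card_sturm A_le.
have S_max : 8 * W (sturm #|A|) = bound8W #|A|.
  by apply/eqP; rewrite -{2}S_card (W_leqif _).2 optimal_arcs_sturm.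
split=> [maxA | optA B B_card].
  rewrite -(W_leqif A).2 eqn_leq (W_leqif A).1 -S_max leq_pmul2l //.
  exact: maxA.
have /eqP A_max : 8 * W A == bound8W #|A| by rewrite (W_leqif A).2.
by rewrite -(leq_pmul2l (isT : 0 < 8)) A_max -B_card (W_leqif B).1.
Qed.

Local Notation one := (inZp 1 : T).

Lemma val_one : val one = 1.
Proof. exact: val_inZp. Qed.

Lemma cyc_adj_succ (x : T) : cyc_adj x (x + one)%R.
Proof. by rewrite /cyc_adj val_ordD val_one addn1 eqxx. Qed.

Lemma cyc_adjP (x y : T) : cyc_adj x y -> y = (x + one)%R \/ x = (y + one)%R.
Proof.
by case/orP => /eqP h; [left | right]; apply: val_inj; rewrite val_ordD val_one h addn1.
Qed.

Lemma induced_adj_sym (P : {set T}) : symmetric (induced_adj P).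
Proof.
move=> x y; rewrite /induced_adj /cyc_adj.
by case: (x \in P); case: (y \in P) => //=; rewrite orbC.
Qed.

Lemma arc_connected s L : connected_set (arc s L).
Proof.
have csym := sym_connect_sym (induced_adj_sym (arc s L)).
suff from_s v : v \in arc s L -> connect (induced_adj (arc s L)) s v.
  by move=> x y hx hy; apply: connect_trans (from_s y hy); rewrite csym; apply: from_s.
move=> hv.
suff walk t : t < L -> t < N -> connect (induced_adj (arc s L)) s (s + inZp t)%R.
  have := walk (val (v - s)%R); rewrite -in_arc valZpK addrCA subrr addr0.
  by apply=> //; apply: ltn_ord.
elim: t => [|t IH] tL tN; first by rewrite (_ : inZp 0 = 0%R) ?addr0 //; apply: val_inj.
apply: connect_trans (IH (ltnW tL) (ltnW tN)) (connect1 _).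
have -> : (s + inZp t.+1 = (s + inZp t) + one)%R.
  apply: val_inj; rewrite !val_ordD val_one /= (modn_small tN) (modn_small (ltnW tN)).
  by rewrite modnDml addn1 addnS.
have shift x : (s + x - s = x)%R by rewrite addrC addKr.
rewrite /induced_adj cyc_adj_succ !in_arc -(addrA s _ one) !shift.
by rewrite val_ordD val_one val_inZp ?(ltnW tN) // addn1 modn_small // (ltnW tL) tL.
Qed.

Section ConnectedIsArc.
Variables (P : {set T}) (q : T).
Hypotheses (qNP : q \notin P) (P_conn : connected_set P).

(* Positions are counted from the successor of the missing vertex [q], so that a
   connected set avoiding [q] must occupy an interval of positions. *)
Definition pos (v : T) := val (v - (q + one))%R.

Lemma pos_inj v w : pos v = pos w -> v = w.
Proof. by move/val_inj/addIr. Qed.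

Lemma pos_q : pos q = p.
Proof.
rewrite /pos opprD addrA subrr add0r.
have -> : val (- one)%R = (N - val one) %% N by [].
by rewrite val_one modn_small; lia.
Qed.

Lemma pos_lt v : v \in P -> pos v < p.
Proof.
move=> vP; have := ltn_ord (v - (q + one))%R; rewrite -/(pos v) => pos_ltN.
case: (ltnP (pos v) p) => // pos_ge.
have /pos_inj evq : pos v = pos q by rewrite pos_q; lia.
by move: qNP; rewrite -evq vP.
Qed.

Lemma pos_adj x z : x \in P -> z \in P -> cyc_adj x z ->
  pos z = (pos x).+1 \/ pos x = (pos z).+1.
Proof.
move=> xP zP /cyc_adjP [->|->]; [left | right].
  rewrite {1}/pos addrAC (val_ordD _ one) val_one -/(pos x) modn_small ?addn1 //.
  by have := pos_lt xP; lia.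
rewrite {1}/pos addrAC (val_ordD _ one) val_one -/(pos z) modn_small ?addn1 //.
by have := pos_lt zP; lia.
Qed.

Lemma path_pos_between x s c : x \in P -> path (induced_adj P) x s ->
  (pos x <= c <= pos (last x s)) || (pos (last x s) <= c <= pos x) ->
  exists2 z, z \in P & pos z = c.
Proof.
elim: s x => [|z s IH] x xP /=; first by move=> _ hc; exists x => //; lia.
case/andP => /and3P [_ zP xz] zs hc.
have [<-|xc] := eqVneq (pos x) c; first by exists x.
apply: (IH z zP zs).
have := pos_adj xP zP xz; move/eqP: xc; move: hc.
by move: (pos x) (pos z) (pos (last z s)) => a b l; lia.
Qed.

Lemma connected_arc v0 : v0 \in P -> exists s, P = arc s #|P|.
Proof.
move=> v0P.
have [vl vlP lo_min] := arg_minnP pos v0P.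
have [vh vhP hi_max] := arg_maxnP pos v0P.
have hi_lt := pos_lt vhP; have lo_hi := lo_min vh vhP.
set lo := pos vl in lo_min lo_hi *; set hi := pos vh in hi_max hi_lt lo_hi *.
have EP : P = arc (q + one + inZp lo)%R (hi - lo).+1.
  apply/setP => v; rewrite in_arc opprD addrA val_ordB val_inZp; last lia.
  rewrite -/(pos v); case: (boolP (v \in P)) => vP.
    have v_le : pos v <= hi := hi_max v vP; have lo_v : lo <= pos v := lo_min v vP.
    by rewrite lo_v; lia.
  apply/esym/negbTE; case: (leqP lo (pos v)) => lo_v; last lia.
  apply/negP => v_le.
  have [s vs el] := connectP (P_conn vlP vhP).
  have [z zP ez] := @path_pos_between vl s (pos v) vlP vs ltac:(rewrite -el; lia).
  by move: vP; rewrite -(pos_inj ez) zP.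
by exists (q + one + inZp lo)%R; rewrite {2}EP card_arc (minn_idPl _) //; lia.
Qed.

End ConnectedIsArc.

Lemma card_half_arc s : #|arc s half| = half.
Proof. by rewrite card_arc; apply/minn_idPl/half_leN. Qed.

Lemma card_setC_half_arc s : #|~: arc s half| = N - half.
Proof. by have := cardsC (arc s half); rewrite card_ord card_half_arc; lia. Qed.

Lemma setC_half_arc s : ~: arc s half = arc (s + inZp half)%R (N - half).
Proof.
have half_lt : half < N by have := half_bounds; lia.
apply/setP => v; rewrite in_setC !in_arc opprD addrA (val_ordB (v - s)%R) val_inZp //.
by case: (v - s)%R => d d_lt /=; case: leqP; lia.
Qed.

Lemma eq_conn_bipartition_sym (P Q : {set T}) :
  eq_conn_bipartition P Q -> eq_conn_bipartition Q P.
Proof.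
by case=> PQ_cover PQ_disj [P0 Q0] [PQ QP] [Pc Qc]; split; rewrite 1?setUC 1?setIC.
Qed.

Lemma eq_conn_bipartition_half_arc s : eq_conn_bipartition (arc s half) (~: arc s half).
Proof.
have := half_bounds; split; rewrite ?setUCr ?setICr //.
- by rewrite -!card_gt0 card_half_arc card_setC_half_arc; split; lia.
- by rewrite card_half_arc card_setC_half_arc; split; lia.
- by rewrite setC_half_arc; split; apply: arc_connected.
Qed.

Lemma eq_conn_bipartition_cases (P Q : {set T}) : eq_conn_bipartition P Q ->
  exists s, P = arc s half /\ Q = ~: arc s half \/ Q = arc s half /\ P = ~: arc s half.
Proof.
case=> PQ_cover PQ_disj [/set0Pn [v vP] /set0Pn [w wQ]] [PQ QP] [Pc Qc].
have EQ : Q = ~: P.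
  apply/setP => u; rewrite in_setC.
  have := in_setT u; rewrite -PQ_cover in_setU.
  have := in_set0 u; rewrite -PQ_disj in_setI.
  by case: (u \in P); case: (u \in Q).
have cardPQ : #|P| + #|Q| = N by rewrite EQ cardsC card_ord.
have := half_bounds; case: (leqP #|P| #|Q|) => P_small hb.
  have wNP : w \notin P by rewrite -in_setC -EQ.
  have [s Ps] := connected_arc wNP Pc vP.
  by exists s; left; rewrite EQ Ps (_ : #|P| = half) //; lia.
have vNQ : v \notin Q by rewrite EQ in_setC negbK.
have [s Qs] := connected_arc vNQ Qc wQ.
exists s; right; rewrite -[P]setCK -EQ Qs (_ : #|Q| = half) //; lia.
Qed.

Lemma weakly_balancedE (A : {set T}) : weakly_balanced A <-> optimal_arcs A.
Proof.
split=> [wb | /forallP opt P Q /eq_conn_bipartition_cases [s [[-> ->]|[-> ->]]]].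
  apply/forallP => s; have := inside_le A s.
  have [+ + +] := wb _ _ (eq_conn_bipartition_half_arc s).
  have [+ + +] := wb _ _ (eq_conn_bipartition_sym (eq_conn_bipartition_half_arc s)).
  rewrite /optimal_split card_outside -/(inside A s).
  rewrite card_half_arc card_setC_half_arc.
  by have := odd_double_half N; rewrite -/half; case: (odd N) => /=; lia.
all: have := opt s; have := inside_le A s; rewrite /optimal_split.
all: rewrite card_outside card_half_arc card_setC_half_arc -/(inside A s).
all: by have := odd_double_half N; rewrite -/half; case: (odd N) => /=; split; lia.
Qed.

Lemma balancedE (A : {set T}) :
  ~~ odd N \/ odd #|A| -> balanced A <-> optimal_arcs A.
Proof.
move=> parity.
split=> [bal | /forallP opt P Q /eq_conn_bipartition_cases [s [[-> ->]|[-> ->]]]].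
  apply/forallP => s; have := inside_le A s.
  have [+ +] := bal _ _ (eq_conn_bipartition_half_arc s).
  rewrite /optimal_split card_outside -/(inside A s).
  have := odd_double_half #|A|; move: parity.
  by case: (odd N); case: (odd #|A|) => /=; lia.
all: have := opt s; have := inside_le A s; rewrite /optimal_split.
all: rewrite card_outside -/(inside A s).
all: have := odd_double_half #|A|; move: parity.
all: by case: (odd N); case: (odd #|A|) => /=; lia.
Qed.

Lemma not_balanced_even (B : {set T}) :
  odd N -> ~~ odd #|B| -> 0 < #|B| -> ~ balanced B.
Proof.
move=> N_odd B_even B_gt0 bal.
have inside_half s : (inside B s).*2 = #|B|.
  have [] := bal _ _ (eq_conn_bipartition_half_arc s).
  rewrite card_outside -/(inside B s).
  by have := inside_le B s; have := odd_double_half #|B|; rewrite (negbTE B_even); lia.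
have sum_double : 2 * \sum_(s : T) inside B s = N * #|B|.
  rewrite big_distrr /=; under eq_bigr do rewrite mul2n inside_half.
  by rewrite sum_nat_const card_ord.
move: sum_double; rewrite sum_inside.
by have := odd_double_half N; rewrite N_odd -/half; nia.
Qed.

End Cycle.

Theorem mainTheorem16 (n : nat) (A : {set 'I_n}) :
  3 <= n -> 2 <= #|A| <= n ->
  [/\ (~~ odd n \/ odd #|A| -> (maximizer A <-> balanced A)),
      (odd n /\ ~~ odd #|A| ->
         (maximizer A <-> weakly_balanced A) /\
         (forall B : {set 'I_n}, #|B| = #|A| -> maximizer B -> ~ balanced B)) &
      (maximizer A <-> weakly_balanced A)].
Proof.
case: n A => [|p] A // n_ge3 /andP[A_ge2 A_le].
have p_gt0 : 0 < p by lia.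
have maxE := maximizerE p_gt0 A_le.
have wbE := weakly_balancedE p_gt0 A.
split=> [parity | [n_odd A_even] |]; last by rewrite maxE wbE.
  by rewrite maxE balancedE.
split=> [|B B_card _]; first by rewrite maxE wbE.
by apply: not_balanced_even; rewrite ?B_card //; lia.
Qed.
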